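(* For every integer $n \ge 1$, let $f(n)$ be the number of partitions $\lambda \vdash n$ that have a fixed hook. Then $$f(n) = \sum_{\lambda \vdash n} \#\{\, i \ge 1 : \text{the part } i \text{ occurs in } \lambda \text{ with multiplicity exactly } i \,\}.$$
   Context: A partition $\lambda=(\lambda_1,\dots,\lambda_t)$ of $n$ (written $\lambda\vdash n$) is a sequence of integers $\lambda_1\ge\lambda_2\ge\cdots\ge\lambda_t>0$ with $\sum_i\lambda_i=n$; $t$ is its number of parts. The first-column hook lengths of $\lambda$ are $h_{i,1}(\lambda)=\lambda_i+(t-i)$ for $1\le i\le t$ (the hook length of the box $(i,1)$ of the Young diagram). For $h\in\mathbb{Z}$, $\lambda$ has an $h$-fixed hook if there is some $i\ge1$ with $h_{i,1}(\lambda)=i+h$; a $0$-fixed hook is called a fixed hook, i.e. $\lambda$ has a fixed hook if $h_{i,1}(\lambda)=i$ for some $i$. *)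

From mathcomp Require Import all_boot.
Set Implicit Arguments. Unset Strict Implicit. Unset Printing Implicit Defensive.

Definition is_partition (n : nat) (l : seq nat) : bool :=
  [&& sorted geq l, all (fun x => 0 < x) l & sumn l == n].

(* first-column hook length h_{i,1} = lambda_i + (t - i), for 1 <= i <= t *)
Definition hook1 (l : seq nat) (i : nat) : nat :=
  nth 0 l i.-1 + (size l - i).

Definition has_fixed_hook (l : seq nat) : bool :=
  has (fun i => hook1 l i == i) (iota 1 (size l)).

(* number of i >= 1 such that part i occurs in l with multiplicity exactly i.
   (Such i satisfy i <= i*i <= sumn l, so ranging over 1..sumn l suffices.) *)
Definition mult_eq_count (l : seq nat) : nat :=
  count (fun i => count_mem i l == i) (iota 1 (sumn l)).

From mathcomp Require Import all_boot zify.
Set Implicit Arguments. Unset Strict Implicit. Unset Printing Implicit Defensive.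

(* Since h_{i,1} - i strictly decreases with i, a partition has at most one fixed hook, so f(n)
   splits as a sum over j of the number of partitions with a fixed hook in a row of length j;
   it suffices to biject these, for each j, with the partitions in which j has multiplicity j.
   A fixed hook in row i with lambda_i = j means i - 1 parts >= j above that row and i - j parts
   <= j below it.  Subtracting j above and 1 below encodes lambda by a nondecreasing sequence bs
   of length (j - 1) + m and a nonincreasing sequence a of m entries in [0, j - 1]
   (hook_partition).
   A partition with exactly j parts equal to j is encoded by its parts L < j and a nondecreasing
   sequence D of length m', its parts > j being j + 1 + D (mult_partition).  Both encodings give
   the same weight when m = m' and sumn bs + sumn a = sumn L + sumn D, and [transfer] is a
   bijection between the two kinds of data preserving exactly these quantities: a bijective form
   of the q-binomial identity (q)_(c+m) = [c+m choose m]_q (q)_c (q)_m. *)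

Lemma geq_trans : transitive geq.
Proof. by move=> a b c /= H1 H2; apply: leq_trans H2 H1. Qed.

Lemma sorted_geq_cat_cons (s1 s2 : seq nat) x :
  sorted geq (s1 ++ x :: s2) <->
  [/\ sorted geq s1, all (fun y => x <= y) s1, sorted geq s2 & all (fun y => y <= x) s2].
Proof.
elim: s1 => [|a s1 IH] /=.
  by rewrite (path_sortedE geq_trans) andbC; split=> [/andP[-> ->]|[_ _ -> ->]].
rewrite !(path_sortedE geq_trans) all_cat /=; split.
  by case/andP=> /and3P[-> Hxa _] /IH[-> -> -> ->]; rewrite Hxa.
case=> /andP[-> S1] /andP[Hxa A1] S2 A2; rewrite Hxa (IH.2 (And4 S1 A1 S2 A2)).
by rewrite (sub_all _ A2) //= => y Hy; apply: leq_trans Hy Hxa.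
Qed.

Lemma sorted_geq_nseq b c s : sorted geq s -> all (fun y => y <= c) s ->
  sorted geq (nseq b c ++ s).
Proof.
move=> Hs Hc; elim: b => [|b IH] //=.
rewrite (path_sortedE geq_trans) IH all_cat Hc !andbT.
by apply/allP=> y /nseqP[-> _] /=.
Qed.

Lemma sorted_geq_map f s : {homo f : x y / x <= y} -> sorted geq s -> sorted geq (map f s).
Proof. by move=> Hf; apply: homo_sorted => x y; apply: Hf. Qed.

Lemma sumn_map_add j s : sumn (map (addn j) s) = j * size s + sumn s.
Proof. by elim: s => [|x s IH] /=; [rewrite muln0 | rewrite IH mulnS; lia]. Qed.

Lemma map_addK j s : map (subn^~ j) (map (addn j) s) = s.
Proof. by rewrite -map_comp map_id_in // => x _ /=; rewrite addKn. Qed.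

Lemma map_subK j s : all (fun y => j <= y) s -> map (addn j) (map (subn^~ j) s) = s.
Proof. by elim: s => //= x s IH /andP [Hx /IH ->]; rewrite subnKC. Qed.

Lemma mem_leq_sumn x s : x \in s -> x <= sumn s.
Proof.
elim: s => //= y s IH; rewrite inE => /orP [/eqP ->|/IH]; first exact: leq_addr.
by move/leq_trans; apply; apply: leq_addl.
Qed.

(* For a partition with parts at most k, [num_ge k] is the multiplicity of k. *)
Local Notation num_ge k := (count (leq k)).

Lemma num_ge_small k s : all (fun y => y < k) s -> num_ge k s = 0.
Proof.
move=> H; apply/eqP; rewrite -leqn0 leqNgt -has_count -all_predC.
by apply: sub_all H => y /=; rewrite -ltnNge.
Qed.

Lemma num_ge_nseq k x : num_ge k (nseq x k) = x.
Proof. by rewrite count_nseq leqnn mul1n. Qed.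

Lemma num_ge_map_add k s : num_ge k (map (addn k) s) = size s.
Proof. by elim: s => //= x s ->; rewrite leq_addr. Qed.

Lemma num_ge_split k s : sorted geq s ->
  all (fun y => k <= y) (take (num_ge k s) s) /\ all (fun y => y < k) (drop (num_ge k s) s).
Proof.
elim: s => [|y s IH] //= Hs; have [Hk Hlt] := IH (path_sorted Hs).
case: (leqP k y) => Hky /=; first by rewrite Hky.
have Hs_lt : all (fun z => z < k) s.
  by apply: sub_all (order_path_min geq_trans Hs) => z /= Hz; apply: leq_ltn_trans Hky.
by rewrite (num_ge_small Hs_lt) /= Hky Hs_lt.
Qed.

Lemma take_num_ge k s b : sorted geq s -> all (fun y => y <= k) s -> b <= num_ge k s ->
  take b s = nseq b k.
Proof.
move=> Hs Hk Hb; have [Htop _] := num_ge_split k Hs.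
have Hsz : size (take b s) = b by rewrite size_takel // (leq_trans Hb (count_size _ _)).
rewrite -{2}Hsz; apply/all_pred1P/allP => y Hy; rewrite /= eqn_leq (allP Hk y (mem_take Hy)).
by move: Hy; rewrite -(take_takel s Hb) => /mem_take /(allP Htop).
Qed.

Lemma num_ge_gt0E k s : sorted geq s -> all (fun y => y <= k) s -> 0 < num_ge k s ->
  s = k :: behead s.
Proof. by move=> Ss Hk Hx; rewrite -{1}(cat_take_drop 1 s) (take_num_ge Ss Hk Hx) drop1. Qed.

Definition raise_top (c b : nat) (L : seq nat) : seq nat := nseq b c.+1 ++ drop b L.

Lemma raise_top_spec c b L : sorted geq L -> all (fun x => 0 < x <= c) L ->
  [/\ sorted geq (raise_top c b L), all (fun x => 0 < x <= c.+1) (raise_top c b L)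
    & num_ge c.+1 (raise_top c b L) = b].
Proof.
rewrite /raise_top => SL AL; have AdL : all (fun x => 0 < x <= c) (drop b L).
  by apply/allP=> x /mem_drop /(allP AL).
split.
- by apply: sorted_geq_nseq; [exact: drop_sorted | apply: sub_all AdL => x /andP[_ /leqW]].
- rewrite all_cat (sub_all _ AdL) ?andbT; first by apply/allP=> x /nseqP[-> _] /=.
  by move=> x /andP[-> /leqW].
- rewrite count_cat num_ge_nseq num_ge_small ?addn0 //.
  by apply: sub_all AdL => x /andP[].
Qed.

Lemma sumn_raise_top c b L : sorted geq L -> all (fun x => 0 < x <= c) L ->
  (0 < c -> b <= num_ge c L) -> sumn (raise_top c b L) = b + sumn L.
Proof.
rewrite /raise_top; case: c => [|c] SL AL Hb.
  by case: L AL {SL Hb} => [|x L] /=; [rewrite cats0 sumn_nseq; lia | case: x].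
have Hle : all (fun y => y <= c.+1) L by apply: sub_all AL => y /andP[].
rewrite -{2}(cat_take_drop b L) (take_num_ge SL Hle (Hb isT)) !sumn_cat !sumn_nseq; lia.
Qed.

(* Going down in the bound c: if the largest part of a equals c, it becomes a part c of L
   and the first entry b of bs goes to D; otherwise b becomes the multiplicity of c in L, by
   raising b of the parts c - 1 of the recursive result. *)
Fixpoint transfer (c : nat) (bs a : seq nat) {struct bs} : seq nat * seq nat :=
  match c with
  | 0 => ([::], bs)
  | c'.+1 =>
    match bs with
    | [::] => ([::], [::])
    | b :: bs' =>
      if head 0 a == c then
        let p := transfer c bs' (behead a) in (c :: p.1, b :: p.2)
      else
        let p := transfer c' bs' a in (raise_top c' b p.1, p.2)
    end
  end.

Definition transfer_dom (c : nat) (bs a : seq nat) : bool :=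
  [&& sorted leq bs, sorted geq a, all (fun y => y <= c) a & size bs == c + size a].

Lemma transfer0 bs a : transfer 0 bs a = ([::], bs).
Proof. by case: bs. Qed.

Lemma transfer_top c b bs a : transfer c.+1 (b :: bs) (c.+1 :: a) =
  (c.+1 :: (transfer c.+1 bs a).1, b :: (transfer c.+1 bs a).2).
Proof. by rewrite /= eqxx. Qed.

Lemma transfer_raise c b bs a : head 0 a != c.+1 -> transfer c.+1 (b :: bs) a =
  (raise_top c b (transfer c bs a).1, (transfer c bs a).2).
Proof. by move=> /negbTE H; rewrite /= H. Qed.

Lemma transfer_dom_top c b bs a :
  transfer_dom c.+1 (b :: bs) (c.+1 :: a) -> transfer_dom c.+1 bs a.
Proof.
case/and4P=> /path_sorted Hbs /path_sorted Ha; rewrite [all _ _]/= => /andP[_ Hc] /eqP Hsz.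
by rewrite /transfer_dom Hbs Ha Hc; apply/eqP; move: Hsz => /=; lia.
Qed.

Lemma transfer_dom_raise c b bs a : transfer_dom c.+1 (b :: bs) a -> head 0 a != c.+1 ->
  transfer_dom c bs a.
Proof.
case/and4P=> Hbs Ha Hc /eqP Hsz Hh; rewrite /transfer_dom (path_sorted Hbs) Ha /=.
apply/andP; split; last by apply/eqP; move: Hsz => /=; lia.
case: a Ha Hc Hh {Hsz} => //= x a Ha /andP[Hx Hc] Hh.
have Hxc : x <= c by rewrite -ltnS ltn_neqAle Hh Hx.
rewrite Hxc; apply: sub_all (order_path_min geq_trans Ha) => y /= Hy.
exact: leq_trans Hy Hxc.
Qed.

Lemma transfer_dom_head c b bs a : transfer_dom c (b :: bs) a -> all (leq b) bs.
Proof. by case/and4P=> /= Hbs _ _ _; move: Hbs; rewrite (path_sortedE leq_trans) => /andP[]. Qed.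

Lemma transfer_dom_cons_top c y bs a : all (leq y) bs -> transfer_dom c.+1 bs a ->
  transfer_dom c.+1 (y :: bs) (c.+1 :: a).
Proof.
move=> Hy /and4P[Sbs Sa Ha /eqP Hsz].
rewrite /transfer_dom /= (path_sortedE leq_trans) (path_sortedE geq_trans).
by rewrite Hy Sbs Sa Ha Hsz addnS leqnn eqxx.
Qed.

Lemma transfer_dom_cons_raise c x bs a : all (leq x) bs -> transfer_dom c bs a ->
  transfer_dom c.+1 (x :: bs) a.
Proof.
move=> Hx /and4P[Sbs Sa Ha /eqP Hsz]; rewrite /transfer_dom /= (path_sortedE leq_trans).
by rewrite Hx Sbs Sa Hsz (sub_all _ Ha) //= => y /leqW.
Qed.

Lemma transfer_dom_head_neq c bs a : transfer_dom c bs a -> head 0 a != c.+1.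
Proof. by case/and4P=> _ _; case: a => //= y a /andP[Hy _] _; rewrite neq_ltn ltnS Hy. Qed.

Lemma transfer_dom0 bs a : transfer_dom 0 bs a = sorted leq bs && (a == nseq (size bs) 0).
Proof.
rewrite /transfer_dom add0n; apply/and4P/andP => [[-> _ Ha /eqP ->] | [-> /eqP ->]].
  split=> //; apply/eqP; elim: a Ha => //= x a IH /andP[].
  by rewrite leqn0 => /eqP -> /IH <-.
rewrite size_nseq -[nseq _ _]cats0 sorted_geq_nseq // cats0.
by split=> //; apply/allP=> y /nseqP[-> _].
Qed.

Lemma transfer_spec c bs a L D : transfer_dom c bs a -> transfer c bs a = (L, D) ->
  [/\ sorted geq L, all (fun x => 0 < x <= c) L, sorted leq D, size D = size a
    & sumn L + sumn D = sumn bs + sumn a] /\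
  forall z, all (leq z) bs -> all (leq z) D /\ (0 < c -> z <= num_ge c L).
Proof.
(* The second conjunct is the invariant making the raise step sound: L has at least b parts
   equal to c when b bounds bs from below. *)
elim: bs c a L D => [|b bs IH] [|c] a L D V.
- case/and4P: V => _ _ _ /eqP Hsz; have -> : a = [::] by apply/size0nil; move: Hsz => /=; lia.
  by rewrite transfer0 => -[<- <-].
- by case/and4P: V => _ _ _ /eqP; rewrite addSn.
- move: V; rewrite transfer_dom0 => /andP[Hbs /eqP ->]; rewrite transfer0 => -[<- <-].
  by rewrite sumn_nseq size_nseq mul0n addn0; split=> [|z Hz]; split.
have Hb := transfer_dom_head V.
have [Htop | Hraise] := boolP (head 0 a == c.+1).
- case: a V Htop => [|x a] //; rewrite [head _ _]/= => V /eqP Ex; subst x.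
  rewrite transfer_top; case E: (transfer _ bs a) => [L' D'] /= [<- <-].
  have [[SL AL SD SzD Sum] Inv] := IH _ _ _ _ (transfer_dom_top V) E.
  have [HD' HL'] := Inv b Hb.
  split.
    split=> //=; rewrite ?leqnn ?AL ?SzD //; last by lia.
      by rewrite (path_sortedE geq_trans) SL andbT; apply: sub_all AL => x /andP[].
    by rewrite (path_sortedE leq_trans) SD HD'.
  move=> z /andP[Hzb _]; split=> /=.
    by rewrite Hzb; apply: sub_all HD' => x; apply: leq_trans.
  by move=> _; rewrite leqnn add1n leqW // (leq_trans Hzb (HL' isT)).
- have V' := transfer_dom_raise V Hraise.
  rewrite transfer_raise //; case E: (transfer _ bs a) => [L' D'] /= [<- <-].
  have [[SL AL SD SzD Sum] Inv] := IH _ _ _ _ V' E.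
  have [HD' HL'] := Inv b Hb.
  have [SL2 AL2 Top2] := raise_top_spec b SL AL.
  split; first by split=> //; rewrite (sumn_raise_top SL AL HL') /=; lia.
  move=> z /andP[Hzb _]; split; last by rewrite Top2.
  by apply: sub_all HD' => x; apply: leq_trans.
Qed.

Lemma raise_top_inj c b1 b2 L1 L2 :
  sorted geq L1 -> all (fun x => 0 < x <= c) L1 -> (0 < c -> b1 <= num_ge c L1) ->
  sorted geq L2 -> all (fun x => 0 < x <= c) L2 -> (0 < c -> b2 <= num_ge c L2) ->
  raise_top c b1 L1 = raise_top c b2 L2 -> b1 = b2 /\ L1 = L2.
Proof.
move=> SL1 AL1 HL1 SL2 AL2 HL2 E.
have Eb : b1 = b2.
  have [_ _ <-] := raise_top_spec b1 SL1 AL1; have [_ _ <-] := raise_top_spec b2 SL2 AL2.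
  by rewrite E.
subst b2; split=> //.
have Ed : drop b1 L1 = drop b1 L2.
  by move/eqP: E; rewrite /raise_top eqseq_cat ?size_nseq // eqxx => /eqP.
case: c AL1 AL2 HL1 HL2 {E} => [|c] AL1 AL2 HL1 HL2.
  by case: L1 L2 AL1 AL2 {SL1 SL2 Ed HL1 HL2} => [|[]] // [|[]].
have top L : sorted geq L -> all (fun x => 0 < x <= c.+1) L -> b1 <= num_ge c.+1 L ->
    take b1 L = nseq b1 c.+1.
  by move=> SL AL; apply: take_num_ge SL _; apply: sub_all AL => x /andP[].
by rewrite -(cat_take_drop b1 L1) -(cat_take_drop b1 L2) Ed !top // ?HL1 ?HL2.
Qed.

Lemma transfer_top_neq_raise c b bs a b' bs' a' :
  transfer_dom c.+1 (b :: bs) (c.+1 :: a) -> transfer_dom c.+1 (b' :: bs') a' ->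
  head 0 a' != c.+1 -> transfer c.+1 (b :: bs) (c.+1 :: a) <> transfer c.+1 (b' :: bs') a'.
Proof.
move=> V V' Hh; rewrite transfer_top transfer_raise //.
case E: (transfer c.+1 bs a) => [L D]; case E': (transfer c bs' a') => [L' D'] /= [EL ED].
have [_ Inv] := transfer_spec (transfer_dom_top V) E.
have [_ HL] := Inv b (transfer_dom_head V).
have [[SL' AL' _ _ _] Inv'] := transfer_spec (transfer_dom_raise V' Hh) E'.
have [HD' _] := Inv' b' (transfer_dom_head V').
have [_ _ Hb'] := raise_top_spec b' SL' AL'; rewrite -EL /= leqnn add1n in Hb'.
by move: HD' (HL isT); rewrite -ED /= -Hb' => /andP[]; lia.
Qed.

Lemma transfer_inj c bs a bs' a' : transfer_dom c bs a -> transfer_dom c bs' a' ->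
  transfer c bs a = transfer c bs' a' -> bs = bs' /\ a = a'.
Proof.
have inj0 bs1 a1 bs2 a2 : transfer_dom 0 bs1 a1 -> transfer_dom 0 bs2 a2 ->
    transfer 0 bs1 a1 = transfer 0 bs2 a2 -> bs1 = bs2 /\ a1 = a2.
  by rewrite !transfer_dom0 !transfer0 => /andP[_ /eqP ->] /andP[_ /eqP ->] [->].
elim: bs c a bs' a' => [|b bs IH] [|c] a bs' a'; try exact: inj0.
  by case/and4P=> _ _ _ /eqP; rewrite addSn.
case: bs' => [|b' bs'] V V'; first by case/and4P: V' => _ _ _ /eqP; rewrite addSn.
have [Ht|Hr] := boolP (head 0 a == c.+1); have [Ht'|Hr'] := boolP (head 0 a' == c.+1).
- case: a V Ht => [|x a] //; rewrite [head _ _]/= => V /eqP ?; subst x.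
  case: a' V' Ht' => [|x a'] //; rewrite [head _ _]/= => V' /eqP ?; subst x.
  rewrite !transfer_top => -[E1 -> E2].
  have [-> ->] : bs = bs' /\ a = a'.
    by apply: IH (transfer_dom_top V) (transfer_dom_top V') _; apply: injective_projections.
  by [].
- case: a V Ht => [|x a] //; rewrite [head _ _]/= => V /eqP ?; subst x.
  by move/(transfer_top_neq_raise V V' Hr').
- case: a' V' Ht' => [|x a'] //; rewrite [head _ _]/= => V' /eqP ?; subst x.
  by move/esym/(transfer_top_neq_raise V' V Hr).
rewrite !transfer_raise //.
have W := transfer_dom_raise V Hr; have W' := transfer_dom_raise V' Hr'.
case E: (transfer c bs a) => [L D]; case E': (transfer c bs' a') => [L' D'] /= [EL ED].
have [[SL AL _ _ _] Inv] := transfer_spec W E; have [_ HL] := Inv b (transfer_dom_head V).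
have [[SL' AL' _ _ _] Inv'] := transfer_spec W' E'; have [_ HL'] := Inv' b' (transfer_dom_head V').
have [-> EL'] := raise_top_inj SL AL HL SL' AL' HL' EL.
by have [-> ->] := IH _ _ _ _ W W' (etrans E (etrans (congr2 pair EL' ED) (esym E'))).
Qed.

Definition lower_top (c : nat) (L : seq nat) : seq nat :=
  (if c is 0 then [::] else nseq (num_ge c.+1 L) c) ++ drop (num_ge c.+1 L) L.

Lemma lower_top_spec c L : sorted geq L -> all (fun x => 0 < x <= c.+1) L ->
  [/\ sorted geq (lower_top c L), all (fun x => 0 < x <= c) (lower_top c L),
      0 < c -> num_ge c.+1 L <= num_ge c (lower_top c L),
      size (lower_top c L) <= size L
    & raise_top c (num_ge c.+1 L) (lower_top c L) = L].
Proof.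
move=> SL AL; set x := num_ge c.+1 L.
have [_ Hlow] := num_ge_split c.+1 SL; rewrite -/x in Hlow.
have Hle : all (fun y => y <= c.+1) L by apply: sub_all AL => y /andP[].
have EL : L = nseq x c.+1 ++ drop x L by rewrite -{1}(cat_take_drop x L) (take_num_ge SL Hle).
have AdL : all (fun y => 0 < y <= c) (drop x L).
  by apply/allP=> y Hy; move: (allP Hlow y Hy) (allP AL y (mem_drop Hy)); lia.
have Hsz : size L = x + size (drop x L) by rewrite {1}EL size_cat size_nseq.
rewrite /lower_top /raise_top -/x; clearbody x.
case: c AL Hle EL AdL Hlow => [|c] AL Hle EL AdL Hlow /=.
  have Hd : drop x L = [::] by case: (drop x L) AdL => [|[]].
  by rewrite Hd cats0 in EL *; split=> //.
split.
- apply: sorted_geq_nseq; [exact: drop_sorted | apply: sub_all AdL => y /andP[] //].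
- by rewrite all_cat AdL andbT; apply/allP=> y /nseqP[-> _] /=.
- by rewrite count_cat num_ge_nseq leq_addr.
- by rewrite size_cat size_nseq Hsz.
- by rewrite drop_size_cat ?size_nseq // -EL.
Qed.

Lemma transfer_surj_measure N c L D : c + size L + size D <= N ->
  sorted geq L -> all (fun x => 0 < x <= c) L -> sorted leq D ->
  exists bs a, [/\ transfer_dom c bs a, transfer c bs a = (L, D)
    & forall z, (0 < c -> z <= num_ge c L) -> all (leq z) D -> all (leq z) bs].
Proof.
have base L0 D0 : sorted leq D0 -> all (fun x => 0 < x <= 0) L0 ->
    exists bs a, [/\ transfer_dom 0 bs a, transfer 0 bs a = (L0, D0)
      & forall z, (0 < 0 -> z <= num_ge 0 L0) -> all (leq z) D0 -> all (leq z) bs].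
  move=> SD0; case: L0 => [|[]] // _.
  by exists D0, (nseq (size D0) 0); rewrite transfer_dom0 SD0 eqxx transfer0.
elim: N c L D => [|N IH] [|c] L D HN SL AL SD; try exact: base; first by [].
have [SL' AL' HL' Hsz' EL] := lower_top_spec SL AL.
set x := num_ge c.+1 L in HL' EL *.
have [Hx | Hx] := boolP (all (leq x) D).
- have HN' : c + size (lower_top c L) + size D <= N by move: HN Hsz'; lia.
  have [bs [a [V E Inv]]] := IH c _ D HN' SL' AL' SD.
  have Hbs := Inv x HL' Hx.
  exists (x :: bs), a; split; first exact: transfer_dom_cons_raise.
    by rewrite transfer_raise ?(transfer_dom_head_neq V) // E /= EL.
  move=> z Hz _; rewrite /= (Hz isT) /=.
  by apply: sub_all Hbs => y; apply: leq_trans (Hz isT).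
case: D SD Hx HN => [|y D] //= SD Hx HN.
move: SD; rewrite (path_sortedE leq_trans) => /andP[HyD SD].
have Hxy : y < x.
  rewrite ltnNge; apply: contra Hx => Hxy; rewrite Hxy /=.
  by apply: sub_all HyD => z; apply: leq_trans.
have EL1 : L = c.+1 :: behead L.
  by apply: num_ge_gt0E SL _ (leq_ltn_trans (leq0n y) Hxy); apply: sub_all AL => z /andP[].
have Hx1 : x = (num_ge c.+1 (behead L)).+1 by rewrite /x {1}EL1 /= leqnn.
have HN' : c.+1 + size (behead L) + size D <= N by move: HN; rewrite {1}EL1 /=; lia.
move: SL AL; rewrite EL1 /= (path_sortedE geq_trans) => /andP[_ SL1] /andP[_ AL1].
have [bs [a [V E Inv]]] := IH c.+1 _ D HN' SL1 AL1 SD.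
have Hbs : all (leq y) bs by apply: Inv HyD => _; rewrite -ltnS -Hx1.
exists (y :: bs), (c.+1 :: a); split; first exact: transfer_dom_cons_top.
  by rewrite transfer_top E -EL1.
move=> z _ /andP[Hzy _]; rewrite /= Hzy.
by apply: sub_all Hbs => w; apply: leq_trans.
Qed.

Lemma transfer_surj c L D : sorted geq L -> all (fun x => 0 < x <= c) L -> sorted leq D ->
  exists bs a, transfer_dom c bs a /\ transfer c bs a = (L, D).
Proof.
move=> SL AL SD; have [bs [a [V E _]]] := transfer_surj_measure (leqnn _) SL AL SD.
by exists bs, a.
Qed.

Definition fixed_hook_part (j : nat) (l : seq nat) : bool :=
  has (fun i => (hook1 l i == i) && (nth 0 l i.-1 == j)) (iota 1 (size l)).

Definition mult_eq (j : nat) (l : seq nat) : bool := count_mem j l == j.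

Definition hook_partition (j : nat) (bs a : seq nat) : seq nat :=
  map (addn j) (rev bs) ++ j :: map (addn 1) a.

Definition mult_partition (j : nat) (LD : seq nat * seq nat) : seq nat :=
  map (addn j.+1) (rev LD.2) ++ nseq j j ++ LD.1.

(* With t parts and the fixed hook in row i of length j, t - i = i - j, so i = t - (t - j)/2. *)
Definition hook_to_mult (j : nat) (l : seq nat) : seq nat :=
  let i := size l - (size l - j)./2 in
  mult_partition j (transfer j.-1 (rev (map (subn^~ j) (take i.-1 l))) (map (subn^~ 1) (drop i l))).

Lemma hook_partition_spec j bs a : 0 < j -> transfer_dom j.-1 bs a ->
  [&& sorted geq (hook_partition j bs a), all (fun x => 0 < x) (hook_partition j bs a)
    & fixed_hook_part j (hook_partition j bs a)].
Proof.
move=> Hj /and4P[Sbs Sa Ha /eqP Hsz]; apply/and3P; split.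
- rewrite /hook_partition; apply/sorted_geq_cat_cons; split.
  + by apply: sorted_geq_map; [move=> x y; rewrite leq_add2l | rewrite -rev_sorted revK].
  + by rewrite all_map; apply/allP=> x _ /=; rewrite leq_addr.
  + by apply: sorted_geq_map.
  + by rewrite all_map; apply: sub_all Ha => x /= Hx; lia.
- by rewrite all_cat /= Hj !all_map; apply/andP; split; apply/allP=> x _ /=; lia.
apply/hasP; exists (size bs).+1.
  by rewrite mem_iota /hook_partition size_cat /= size_map size_rev; lia.
rewrite /hook1 /hook_partition /= nth_cat size_map size_rev ltnn subnn /= eqxx andbT.
by rewrite size_cat /= !size_map size_rev; apply/eqP; lia.
Qed.

Lemma fixed_hook_partP j l : sorted geq l -> all (fun x => 0 < x) l -> fixed_hook_part j l ->
  exists bs a, [/\ 0 < j, transfer_dom j.-1 bs a & l = hook_partition j bs a].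
Proof.
move=> SL PL /hasP[i]; rewrite mem_iota => /andP[Hi1 Hi2] /andP[/eqP Hh /eqP Hn].
rewrite /hook1 Hn in Hh.
have Hk : i.-1 < size l by lia.
have El : l = take i.-1 l ++ j :: drop i l.
  by rewrite -Hn -{1}(cat_take_drop i.-1 l) (drop_nth 0 Hk) prednK.
have := SL; rewrite {1}El => /sorted_geq_cat_cons[_ Habove _ Hbelow].
have Hj : 0 < j by rewrite -Hn; apply: (allP PL); apply: mem_nth.
have Hpos : all (fun y => 1 <= y) (drop i l) by apply/allP=> y /mem_drop /(allP PL).
exists (rev (map (subn^~ j) (take i.-1 l))), (map (subn^~ 1) (drop i l)); split => //.
  rewrite /transfer_dom rev_sorted size_rev !size_map size_take Hk size_drop.
  apply/and4P; split.
  - by apply: sorted_geq_map; [move=> x y; exact: leq_sub2r | exact: take_sorted].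
  - by apply: sorted_geq_map; [move=> x y; exact: leq_sub2r | exact: drop_sorted].
  - by rewrite all_map; apply: sub_all Hbelow => y /= Hy; lia.
  - by apply/eqP; lia.
by rewrite /hook_partition revK !map_subK.
Qed.

Lemma hook_to_mult_hook j bs a : 0 < j -> transfer_dom j.-1 bs a ->
  hook_to_mult j (hook_partition j bs a) = mult_partition j (transfer j.-1 bs a).
Proof.
move=> Hj /and4P[_ _ _ /eqP Hsz].
have Hbs : size (map (addn j) (rev bs)) = size bs by rewrite size_map size_rev.
have Ht : size (hook_partition j bs a) = size bs + (size a).+1.
  by rewrite size_cat /= !size_map size_rev.
rewrite /hook_to_mult Ht.
have -> : size bs + (size a).+1 - (size bs + (size a).+1 - j)./2 = (size bs).+1.
  have -> : size bs + (size a).+1 - j = (size a).*2 by rewrite -addnn Hsz; lia.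
  by rewrite half_double; lia.
rewrite /hook_partition /= take_size_cat // map_addK revK.
by rewrite -cat_rcons drop_size_cat ?size_rcons ?Hbs // map_addK.
Qed.

Lemma sumn_hook_partition j bs a : 0 < j -> transfer_dom j.-1 bs a ->
  sumn (hook_partition j bs a) = sumn (mult_partition j (transfer j.-1 bs a)).
Proof.
move=> Hj V; case E: (transfer _ bs a) => [L D].
have [[_ _ _ SzD Sum] _] := transfer_spec V E; case/and4P: V => _ _ _ /eqP Hsz.
rewrite /hook_partition /mult_partition /= !sumn_cat /= !sumn_map_add sumn_nseq.
rewrite !size_rev !sumn_rev SzD Hsz.
by case: j Hj Hsz {E} => [|j] // _ Hsz /=; nia.
Qed.

Lemma mult_partition_spec j L D : 0 < j -> sorted geq L -> all (fun x => 0 < x <= j.-1) L ->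
  sorted leq D ->
  [&& sorted geq (mult_partition j (L, D)), all (fun x => 0 < x) (mult_partition j (L, D))
    & mult_eq j (mult_partition j (L, D))].
Proof.
move=> Hj SL AL SD; have AL' : all (fun x => x < j) L by apply: sub_all AL => x; lia.
have -> : mult_eq j (mult_partition j (L, D)).
  rewrite /mult_eq /mult_partition /= !count_cat count_nseq /= eqxx mul1n.
  rewrite (count_memPn _) ?(count_memPn _) ?addn0 //.
  - by apply/negP=> /(allP AL'); rewrite ltnn.
  - by apply/mapP=> -[x _ /eqP]; lia.
rewrite andbT /mult_partition /=; case: j Hj AL AL' => [|j] // _ AL AL' /=; apply/andP; split.
- apply/sorted_geq_cat_cons; split.
  + by apply: sorted_geq_map; [move=> x y; rewrite leq_add2l | rewrite -rev_sorted revK].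
  + by rewrite all_map; apply/allP=> x _ /=; lia.
  + by apply: sorted_geq_nseq => //; apply: sub_all AL' => x /ltnW.
  + by rewrite all_cat (sub_all _ AL') ?andbT; [apply/allP=> x /nseqP[-> _] | move=> x /ltnW].
- apply/allP=> x; rewrite mem_cat inE mem_cat => /or4P[/mapP[y _ ->] | /eqP -> | | ] //.
    by case/nseqP=> ->.
  by case/(allP AL)/andP.
Qed.

Lemma mult_partitionP j m : 0 < j -> sorted geq m -> all (fun x => 0 < x) m -> mult_eq j m ->
  exists L D, [/\ sorted geq L, all (fun x => 0 < x <= j.-1) L, sorted leq D
    & m = mult_partition j (L, D)].
Proof.
move=> Hj SM PM /eqP Hm.
have [Habove Hbelow] := num_ge_split j.+1 SM.
set d := num_ge j.+1 m in Habove Hbelow; set T := take d m in Habove *.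
set R := drop d m in Hbelow *.
have HjT : count_mem j T = 0 by apply/count_memPn/negP=> /(allP Habove); rewrite ltnn.
have HjR : num_ge j R = j.
  rewrite -[RHS]Hm -(cat_take_drop d m) count_cat -/T -/R HjT add0n.
  by apply: eq_in_count => x /(allP Hbelow); rewrite ltnS /= eqn_leq => ->.
have [Hj_R Hlt_R] := num_ge_split j (drop_sorted d SM); rewrite -/R HjR in Hj_R Hlt_R.
have ET : take j R = nseq j j.
  apply: take_num_ge; [exact: drop_sorted | | by rewrite HjR].
  by apply: sub_all Hbelow => x; rewrite ltnS.
exists (drop j R), (rev (map (subn^~ j.+1) T)); split.
- exact/drop_sorted/drop_sorted.
- apply/allP=> x Hx; have := allP Hlt_R x Hx.
  by have := allP PM x (mem_drop (mem_drop Hx)); lia.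
- rewrite rev_sorted; apply: sorted_geq_map; first by move=> x y; exact: leq_sub2r.
  exact: take_sorted.
by rewrite /mult_partition /= revK map_subK // -ET !cat_take_drop.
Qed.

Lemma mult_partition_inj j L1 D1 L2 D2 : all (fun x => x < j) L1 -> all (fun x => x < j) L2 ->
  mult_partition j (L1, D1) = mult_partition j (L2, D2) -> L1 = L2 /\ D1 = D2.
Proof.
move=> A1 A2 E.
have size_top L D : all (fun x => x < j) L -> num_ge j.+1 (mult_partition j (L, D)) = size D.
  move=> AL; rewrite /mult_partition !count_cat num_ge_map_add size_rev.
  rewrite !num_ge_small ?addn0 //; first by apply: sub_all AL => x /leqW.
  by apply/allP=> x /nseqP[-> _].
have Hsz : size D1 = size D2 by rewrite -(size_top L1 D1 A1) -(size_top L2 D2 A2) E.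
move/eqP: E; rewrite /mult_partition eqseq_cat ?size_map ?size_rev // eqseq_cat // eqxx /=.
by case/andP=> /eqP/(inj_map (@addnI _))/(can_inj (@revK _)) ED /eqP EL.
Qed.

Lemma count_eq_bij (T : eqType) (P Q : pred T) (f : T -> T) (s : seq T) : uniq s ->
  {in s, forall x, P x -> f x \in s /\ Q (f x)} ->
  {in s &, forall x y, P x -> P y -> f x = f y -> x = y} ->
  {in s, forall y, Q y -> exists2 x, x \in s /\ P x & y = f x} ->
  count P s = count Q s.
Proof.
move=> Us Hmap Hinj Hsurj; rewrite -!size_filter; apply/eqP; rewrite eqn_leq.
have Uf : uniq (map f (filter P s)).
  rewrite map_inj_in_uniq ?filter_uniq // => x y.
  by rewrite !mem_filter => /andP[Px sx] /andP[Py sy]; apply: Hinj.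
apply/andP; split; rewrite -(size_map f (filter P s)); apply: uniq_leq_size.
- exact: Uf.
- move=> y /mapP[x]; rewrite mem_filter => /andP[Px sx] ->.
  by have [fs fQ] := Hmap x sx Px; rewrite mem_filter fQ.
- exact: filter_uniq.
move=> y; rewrite mem_filter => /andP[Qy sy]; have [x [sx Px] ->] := Hsurj y sy Qy.
by apply: map_f; rewrite mem_filter Px.
Qed.

Lemma count_fixed_hook_part n j ps : 0 < j -> uniq ps ->
  (forall l, (l \in ps) = is_partition n l) ->
  count (fixed_hook_part j) ps = count (mult_eq j) ps.
Proof.
move=> Hj Ups Hps; apply: (count_eq_bij (f := hook_to_mult j)) => // [l|l1 l2|m].
- rewrite !Hps => /and3P[SL PL /eqP Hn] /(fixed_hook_partP SL PL)[bs [a [_ V El]]].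
  rewrite El hook_to_mult_hook // /is_partition -sumn_hook_partition // -El Hn eqxx andbT.
  case E: (transfer _ bs a) => [L D]; have [[SL' AL' SD _ _] _] := transfer_spec V E.
  by case/and3P: (mult_partition_spec Hj SL' AL' SD) => -> -> ->.
- rewrite !Hps => /and3P[S1 P1 _] /and3P[S2 P2 _].
  move=> /(fixed_hook_partP S1 P1)[bs1 [a1 [_ V1 ->]]] /(fixed_hook_partP S2 P2)[bs2 [a2 [_ V2 ->]]].
  rewrite !hook_to_mult_hook //.
  case E1: (transfer _ bs1 a1) => [L1 D1]; case E2: (transfer _ bs2 a2) => [L2 D2].
  have [[_ AL1 _ _ _] _] := transfer_spec V1 E1; have [[_ AL2 _ _ _] _] := transfer_spec V2 E2.
  have lt_j L : all (fun x => 0 < x <= j.-1) L -> all (fun x => x < j) L.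
    by apply: sub_all => x; lia.
  move=> /(mult_partition_inj (lt_j _ AL1) (lt_j _ AL2)) [EL ED].
  by have [-> ->] := transfer_inj V1 V2 (etrans E1 (etrans (congr2 pair EL ED) (esym E2))).
rewrite Hps => /and3P[SM PM /eqP Hsum] Qm.
have [L [D [SL AL SD Em]]] := mult_partitionP Hj SM PM Qm.
have [bs [a [V E]]] := transfer_surj SL AL SD.
exists (hook_partition j bs a); last by rewrite hook_to_mult_hook // E.
case/and3P: (hook_partition_spec Hj V) => S P F; rewrite Hps /is_partition S P F /=.
by rewrite sumn_hook_partition // E -Em Hsum.
Qed.

Lemma fixed_hook_unique l i i' : sorted geq l -> 0 < i <= size l -> 0 < i' <= size l ->
  hook1 l i = i -> hook1 l i' = i' -> i = i'.
Proof.
wlog le_ii' : i i' / i <= i' => [Hw SL Hi Hi' Hh Hh'|SL /andP[Hi _] /andP[_ Hi'] Hh Hh'].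
  by case: (leqP i i') => [|/ltnW] le; [apply: Hw | apply/esym; apply: Hw].
have Hn : nth 0 l i'.-1 <= nth 0 l i.-1.
  by apply: (sorted_leq_nth geq_trans (fun x => leqnn x) 0 SL); rewrite ?inE; lia.
by move: Hh Hh'; rewrite /hook1; lia.
Qed.

Lemma has_fixed_hook_count n l : is_partition n l ->
  has_fixed_hook l = count (fixed_hook_part^~ l) (iota 1 n) :> nat.
Proof.
case/and3P=> SL PL /eqP Hn.
have [/hasP[i] | Hno] := boolP (has_fixed_hook l); last first.
  apply/esym/eqP; rewrite -leqn0 leqNgt -has_count.
  by apply/hasP=> -[j _ /hasP[i Hi /andP[Hh _]]]; move/negP: Hno; apply; apply/hasP; exists i.
rewrite mem_iota add1n ltnS => Hi /eqP Hh; set v := nth 0 l i.-1.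
have Ev : fixed_hook_part^~ l =1 pred1 v.
  move=> j; apply/hasP/eqP => [[i' Hi' /andP[/eqP Hh' /eqP <-]] | ->].
    by move: Hi'; rewrite mem_iota add1n ltnS => Hi'; rewrite (fixed_hook_unique SL Hi' Hi Hh' Hh).
  by exists i; rewrite ?mem_iota ?add1n ?ltnS ?Hh ?eqxx.
have Hv : v \in l by apply: mem_nth; case/andP: Hi => Hi1 Hi2; rewrite prednK.
rewrite (eq_count Ev) (count_uniq_mem _ (iota_uniq 1 n)) mem_iota add1n ltnS.
by rewrite (allP PL v Hv) -Hn mem_leq_sumn.
Qed.

Lemma count_sum_exchange (I T : Type) (r : seq I) (s : seq T) (F : I -> pred T) :
  \sum_(x <- s) count (F^~ x) r = \sum_(i <- r) count (F i) s.
Proof.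
have count_sum (U : Type) (a : pred U) u : count a u = \sum_(y <- u) a y.
  by rewrite -sum1_count big_mkcond.
under eq_bigr do rewrite count_sum; rewrite exchange_big.
by apply: eq_bigr => i _; rewrite count_sum.
Qed.

Theorem theorem2p1 (n : nat) (ps : seq (seq nat)) :
  1 <= n ->
  uniq ps ->
  (forall l, (l \in ps) = is_partition n l) ->
  count has_fixed_hook ps = sumn (map mult_eq_count ps).
Proof.
move=> _ Ups Hps.
have part l : l \in ps -> is_partition n l by rewrite Hps.
transitivity (\sum_(j <- iota 1 n) count (fixed_hook_part j) ps).
  rewrite -count_sum_exchange -sum1_count big_mkcond /=.
  by apply: eq_big_seq => l /part /has_fixed_hook_count.
transitivity (\sum_(j <- iota 1 n) count (mult_eq j) ps).
  by apply: eq_big_seq => j; rewrite mem_iota => /andP[Hj _]; apply: count_fixed_hook_part Ups Hps.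
rewrite -count_sum_exchange sumnE big_map.
by apply: eq_big_seq => l /part /and3P[_ _ /eqP <-].
Qed.
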